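(* Fix $(\sigma_s,\mu)\in\mathbb{R}^2$ and $\delta\in(0,1/8)$. For $-1/2<\operatorname{Im} t<1/2$ let $$f(t) = -\frac{\operatorname{Li}_2(-e^{2 \pi \mu }) + \operatorname{Li}_2(-e^{2 \pi (t-\sigma_s)}) + \operatorname{Li}_2(-e^{2 \pi(t+\sigma_s)})}{2 \pi i}+2 i \pi \mu t+\pi (t - \mu) +\frac{5 i \pi }{12},\qquad g(t) = e^{\pi (t- \mu)}.$$ Writing $t=t_1+it_2$, there are constants $C>0$ and $c>0$ such that $$\big|e^{f(t)/b^2} g(t)\big| \leq C e^{-\frac{c}{b^2}|t_1|}$$ for all sufficiently large $|t_1|$, all $t_2\in(-1/2,-1/4-\delta)$, and all sufficiently small $b>0$.
   Context: $\operatorname{Li}_2(z)=-\int_0^z\frac{\ln(1-u)}{u}du$ on $\mathbb{C}\setminus[1,\infty)$, with the principal logarithm. *)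

From Stdlib Require Import Reals.
From Coquelicot Require Import Coquelicot.
Open Scope R_scope.

Definition cexp (z : C) : C :=
  (exp (Re z) * cos (Im z), exp (Re z) * sin (Im z)).

(* Principal argument in (-PI, PI]: for w off the closed negative real axis
   it is 2 atan (Im w / (|w| + Re w)); on the negative real axis it is PI
   (the value at w = 0 is irrelevant). *)
Definition carg (w : C) : R :=
  if Req_EM_T (Cmod w + Re w) 0 then PI
  else 2 * atan (Im w / (Cmod w + Re w)).

Definition cln (w : C) : C := (ln (Cmod w), carg w).

(* Dilogarithm Li2 z = - int_0^z ln(1-u)/u du on C \ [1,oo), the integral
   taken along the straight segment u = s z, s in [0,1] (C \ [1,oo) is
   star-shaped w.r.t. 0, so this is the value of the path-independent
   integral): Li2 z = - int_0^1 ln(1 - s z) / s ds, split into real and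
   imaginary parts. *)
Definition Li2 (z : C) : C :=
  (- RInt (fun s => Re (cln (Cminus (RtoC 1) (Cmult (RtoC s) z))) / s) 0 1,
   - RInt (fun s => Im (cln (Cminus (RtoC 1) (Cmult (RtoC s) z))) / s) 0 1).

Definition f_fun (sig mu : R) (t : C) : C :=
  Cplus (Cplus (Cplus
    (Copp (Cdiv (Cplus (Cplus
        (Li2 (Copp (cexp (RtoC (2 * PI * mu)))))
        (Li2 (Copp (cexp (Cmult (RtoC (2 * PI)) (Cminus t (RtoC sig)))))))
        (Li2 (Copp (cexp (Cmult (RtoC (2 * PI)) (Cplus t (RtoC sig)))))))
      (Cmult (RtoC (2 * PI)) Ci)))
    (Cmult (Cmult Ci (RtoC (2 * PI * mu))) t))
    (Cmult (RtoC PI) (Cminus t (RtoC mu))))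
    (Cmult Ci (RtoC (5 * PI / 12))).

Definition g_fun (mu : R) (t : C) : C := cexp (Cmult (RtoC PI) (Cminus t (RtoC mu))).

From Stdlib Require Import Reals Lra FunctionalExtensionality.
From Coquelicot Require Import Coquelicot.
Open Scope R_scope.

(* |e^(f/b^2) g| = exp (Re f / b^2 + PI (t1 - mu)), and up to bounded terms
   Re f = PI t1 + (Lambda (t1 - sig) + Lambda (t1 + sig)) / (2 PI), where
   Lambda x = - Im Li2 (- e^(2 PI (x + i t2))) = int_0^1 arg (1 + s e^(2 PI (x + i t2))) ds / s.
   For t2 in (-1/2, -1/4 - delta) the points 1 + s e^(2 PI (x + i t2)) lie in the
   lower half plane, so Lambda <= 0, which gives decay as t1 -> -oo.  As
   t1 -> +oo they moreover lie, for s >= 2 / (sin (2 PI delta) e^(2 PI x)), in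
   the sector arg <= -2 A with A = atan (1 + sin (2 PI delta) / 3) > PI / 4;
   integrating A / s over that range gives Lambda x <= -4 PI A x + O(1), which
   beats PI t1.  So Re f <= M - g |t1| with g > 0, and for small b the
   b-independent factor g is absorbed into the decay. *)

Lemma Cmod_cexp (z : C) : Cmod (cexp z) = exp (Re z).
Proof.
  unfold Cmod, cexp; cbn [fst snd].
  replace ((exp (Re z) * cos (Im z)) ^ 2 + (exp (Re z) * sin (Im z)) ^ 2)
    with (exp (Re z) ^ 2 * (sin (Im z) ^ 2 + cos (Im z) ^ 2)) by ring.
  rewrite <- !Rsqr_pow2, sin2_cos2, Rmult_1_r, Rsqr_pow2.
  apply sqrt_pow2; left; apply exp_pos.
Qed.

Lemma Re_Cdiv_RtoC (z : C) (r : R) : r <> 0 -> Re (Cdiv z (RtoC r)) = Re z / r.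
Proof.
  intro hr; destruct z as [x y].
  unfold Cdiv, Cmult, Cinv, RtoC, Re; cbn [fst snd]; field; exact hr.
Qed.

Lemma exp_le_compat (x y : R) : x <= y -> exp x <= exp y.
Proof. intros [h | ->]; [left; apply exp_increasing; exact h | apply Rle_refl]. Qed.

Lemma Cmod_add_Re_pos (w : C) : Im w <> 0 -> 0 < Cmod w + Re w.
Proof.
  destruct w as [p q]; unfold Cmod, Re, Im; cbn [fst snd]; intro hq.
  assert (hq2 : 0 < q ^ 2) by (rewrite <- Rsqr_pow2; apply Rsqr_pos_lt; exact hq).
  assert (h : sqrt (p ^ 2) < sqrt (p ^ 2 + q ^ 2))
    by (apply sqrt_lt_1_alt; split; [apply pow2_ge_0 | lra]).
  rewrite <- (Rsqr_pow2 p), sqrt_Rsqr_abs, Rsqr_pow2 in h.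
  pose proof (Rabs_maj2 p); lra.
Qed.

Lemma carg_Im_neq0 (w : C) : Im w <> 0 ->
  carg w = 2 * atan (Im w / (Cmod w + Re w)).
Proof.
  intro hw; pose proof (Cmod_add_Re_pos w hw).
  unfold carg; destruct (Req_EM_T _ 0); [lra | reflexivity].
Qed.

Lemma carg_pos_real (x : R) : 0 < x -> carg (x, 0) = 0.
Proof.
  intro hx; unfold carg, Cmod, Re, Im; cbn [fst snd].
  replace (x ^ 2 + 0 ^ 2) with (Rsqr x) by (unfold Rsqr; ring).
  rewrite sqrt_Rsqr by lra.
  destruct (Req_EM_T _ 0); [lra |].
  unfold Rdiv; rewrite Rmult_0_l, atan_0; ring.
Qed.

Lemma carg_neg (w : C) : Im w < 0 -> carg w < 0.
Proof.
  intro hw; rewrite carg_Im_neq0 by lra.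
  pose proof (Cmod_add_Re_pos w ltac:(lra)).
  assert (h : Im w / (Cmod w + Re w) < 0)
    by (apply Rdiv_neg_pos; assumption).
  apply atan_increasing in h; rewrite atan_0 in h; lra.
Qed.

(* [cot (-2 atan T) = (T^2 - 1) / (2 T)], so the hypothesis puts [w] on or
   below the ray of argument [-2 atan T]. *)
Lemma carg_le_sector (w : C) (T : R) : Im w < 0 -> 1 < T ->
  Re w <= (T ^ 2 - 1) / (2 * T) * Im w -> carg w <= - 2 * atan T.
Proof.
  intros hw hT hsec; rewrite carg_Im_neq0 by lra.
  pose proof (Cmod_add_Re_pos w ltac:(lra)) as hD.
  destruct w as [p q]; unfold Cmod, Re, Im in *; cbn [fst snd] in *.
  set (Q := - q) in *; replace q with (- Q) in * by (unfold Q; ring).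
  assert (hkQ : (T ^ 2 - 1) * Q <= - p * (2 * T)).
  { replace ((T ^ 2 - 1) * Q) with (- ((T ^ 2 - 1) / (2 * T) * - Q) * (2 * T))
      by (field; lra).
    apply Rmult_le_compat_r; lra. }
  assert (hsq : sqrt (p ^ 2 + (- Q) ^ 2) <= Q / T - p).
  { assert (hY : 0 <= Q / T - p).
    { assert (0 < Q / T) by (apply Rdiv_lt_0_compat; lra).
      assert (0 <= (T ^ 2 - 1) * Q) by (apply Rmult_le_pos; nra).
      nra. }
    rewrite <- (sqrt_pow2 (Q / T - p)) by exact hY.
    apply sqrt_le_1_alt.
    apply Rmult_le_reg_r with (T ^ 2); [nra |].
    replace ((Q / T - p) ^ 2 * T ^ 2) with ((Q - p * T) ^ 2) by (field; lra).
    nra. }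
  set (D := sqrt _ + p) in *.
  assert (htan : - Q / D <= - T).
  { apply Rmult_le_reg_r with D; [lra |].
    replace (- Q / D * D) with (- Q) by (field; lra).
    apply Rmult_le_reg_r with (/ T); [apply Rinv_0_lt_compat; lra |].
    unfold Rdiv in hsq; replace (- Q * / T) with (- (Q * / T)) by ring.
    replace (- T * D * / T) with (- D) by (field; lra); unfold D; lra. }
  assert (atan (- Q / D) <= - atan T).
  { rewrite <- atan_opp; destruct htan as [h | ->]; [left; apply atan_increasing |]; lra. }
  lra.
Qed.

Definition ray (u : C) (s : R) : C := (1 + s * Re u, s * Im u).

Definition arg_kernel (u : C) (s : R) : R := carg (ray u s) / s.

Lemma Im_Li2_opp (u : C) : Im (Li2 (Copp u)) = - RInt (arg_kernel u) 0 1.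
Proof.
  unfold Li2, Im at 1; cbn [snd]; do 2 f_equal.
  apply functional_extensionality; intro s.
  unfold arg_kernel, ray, cln, Im at 1; cbn [snd]; do 2 f_equal.
  unfold Cminus, Cplus, Cmult, Copp, RtoC, Re, Im; cbn [fst snd]; f_equal; ring.
Qed.

Lemma arg_kernel_nonpos (u : C) (s : R) : Im u < 0 -> 0 < s -> arg_kernel u s <= 0.
Proof.
  intros hu hs; unfold arg_kernel.
  assert (carg (ray u s) < 0) by (apply carg_neg; unfold ray, Im at 1; cbn; nra).
  apply Rlt_le, Rdiv_neg_pos; assumption.
Qed.

Definition atan_sinc (y : R) : R := if Req_EM_T y 0 then 1 else atan y / y.

Lemma continuous_atan_sinc (y : R) : continuous atan_sinc y.
Proof.
  destruct (Req_EM_T y 0) as [-> | hy].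
  - apply continuity_pt_filterlim; intros eps heps.
    destruct (derivable_pt_lim_atan 0 eps heps) as [d hd].
    exists d; split; [apply cond_pos |].
    intros x [[_ hx0] hxd]; unfold R_dist in *; cbn in *; unfold R_dist in *.
    unfold atan_sinc; destruct (Req_EM_T x 0) as [| hx]; [congruence |].
    destruct (Req_EM_T 0 0); [| congruence].
    rewrite Rminus_0_r in hxd; specialize (hd x hx hxd).
    rewrite Rplus_0_l, atan_0, Rminus_0_r in hd.
    replace (/ (1 + 0 * (0 * 1))) with 1 in hd by field; exact hd.
  - apply continuous_ext_loc with (fun x => atan x / x).
    + assert (hp : 0 < Rabs y) by (apply Rabs_pos_lt; exact hy).
      exists (mkposreal _ hp); intros x hx; unfold atan_sinc.
      destruct (Req_EM_T x 0) as [-> |]; [| reflexivity].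
      change (Rabs (0 - y) < Rabs y) in hx.
      rewrite Rminus_0_l, Rabs_Ropp in hx; lra.
    + apply (ex_derive_continuous (K := R_AbsRing) (V := R_NormedModule)).
      auto_derive; exact hy.
Qed.

(* The half-angle tangent of [ray u s]; it stays finite at [s = 0], where
   [carg (ray u s) / s] has to be extended by continuity. *)
Definition ray_half_tan (u : C) (s : R) : R :=
  Im u / (Cmod (ray u s) + Re (ray u s)).

Lemma ray_denom_pos (u : C) (s : R) : Im u < 0 -> 0 <= s ->
  0 < Cmod (ray u s) + Re (ray u s).
Proof.
  intros hu [hs | <-].
  - apply Cmod_add_Re_pos; unfold ray, Im at 1; cbn; nra.
  - unfold ray, Cmod, Re, Im; cbn [fst snd].
    replace ((1 + 0 * fst u) ^ 2 + (0 * snd u) ^ 2) with 1 by ring.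
    rewrite sqrt_1; lra.
Qed.

Lemma arg_kernel_half_tan (u : C) (s : R) : Im u < 0 -> 0 < s ->
  arg_kernel u s = 2 * ray_half_tan u s * atan_sinc (s * ray_half_tan u s).
Proof.
  intros hu hs.
  pose proof (ray_denom_pos u s hu (Rlt_le _ _ hs)) as hD.
  assert (him : Im (ray u s) = s * Im u) by reflexivity.
  unfold arg_kernel, ray_half_tan, atan_sinc.
  rewrite carg_Im_neq0 by (rewrite him; nra); rewrite him.
  destruct (Req_EM_T _ 0) as [e | _].
  - exfalso; apply Rmult_integral in e as [e | e]; [lra |].
    unfold Rdiv in e; apply Rmult_integral in e as [e | e]; [lra |].
    apply Rinv_neq_0_compat in e; lra.
  - set (D := Cmod (ray u s) + Re (ray u s)) in *.
    replace (s * Im u / D) with (s * (Im u / D)) by (field; lra).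
    field; repeat split; lra.
Qed.

Lemma continuous_ray_half_tan (u : C) (s : R) : Im u < 0 -> 0 <= s ->
  continuous (ray_half_tan u) s.
Proof.
  intros hu hs; pose proof (ray_denom_pos u s hu hs) as hD.
  assert (hsq : 0 < (1 + s * Re u) ^ 2 + (s * Im u) ^ 2).
  { destruct hs as [hs | <-]; [| nra].
    pose proof (pow2_ge_0 (1 + s * Re u)).
    assert (0 < (s * Im u) ^ 2) by (rewrite <- Rsqr_pow2; apply Rsqr_pos_lt; nra).
    lra. }
  apply (ex_derive_continuous (K := R_AbsRing) (V := R_NormedModule)).
  unfold ray_half_tan, ray, Cmod, Re, Im in *; cbn [fst snd] in *.
  auto_derive; simpl in hD, hsq; repeat split; lra.
Qed.

Lemma ex_RInt_arg_kernel (u : C) (a b : R) : Im u < 0 -> 0 <= a -> a <= b ->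
  ex_RInt (arg_kernel u) a b.
Proof.
  intros hu ha hab.
  apply ex_RInt_ext with
    (fun s => 2 * ray_half_tan u s * atan_sinc (s * ray_half_tan u s)).
  - intros s hs; rewrite Rmin_left in hs by lra.
    symmetry; apply arg_kernel_half_tan; lra.
  - apply (ex_RInt_continuous (V := R_CompleteNormedModule)); intros s hs.
    rewrite Rmin_left in hs by lra.
    assert (hk := continuous_ray_half_tan u s hu ltac:(lra)).
    apply continuity_pt_filterlim.
    apply continuity_pt_mult.
    + apply continuity_pt_mult; [apply continuity_pt_const; intros ? ?; reflexivity |].
      apply continuity_pt_filterlim; exact hk.
    + apply (continuity_pt_comp (fun s => s * ray_half_tan u s) atan_sinc).
      * apply continuity_pt_mult; [apply continuity_pt_id |].
        apply continuity_pt_filterlim; exact hk.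
      * apply continuity_pt_filterlim, continuous_atan_sinc.
Qed.

Lemma RInt_arg_kernel_nonpos (u : C) (a b : R) : Im u < 0 -> 0 <= a -> a <= b ->
  RInt (arg_kernel u) a b <= 0.
Proof.
  intros hu ha hab.
  rewrite <- (Ropp_involutive (RInt _ a b)), <- Ropp_0; apply Ropp_le_contravar.
  rewrite <- (RInt_opp (V := R_CompleteNormedModule)) by (apply ex_RInt_arg_kernel; lra).
  apply RInt_ge_0; [exact hab | |].
  - apply (ex_RInt_opp (V := R_CompleteNormedModule)), ex_RInt_arg_kernel; lra.
  - intros s hs; pose proof (arg_kernel_nonpos u s hu ltac:(lra)).
    unfold opp; cbn; lra.
Qed.

Lemma RInt_arg_kernel_pos_real (a : R) : 0 <= a -> RInt (arg_kernel (a, 0)) 0 1 = 0.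
Proof.
  intro ha; rewrite (RInt_ext _ (fun _ => 0)).
  - rewrite RInt_const; unfold scal; simpl; unfold mult; simpl; ring.
  - intros s hs; rewrite Rmin_left in hs by lra.
    unfold arg_kernel, ray, Re, Im; cbn [fst snd].
    rewrite Rmult_0_r, carg_pos_real by nra.
    unfold Rdiv; apply Rmult_0_l.
Qed.

Lemma RInt_inv (beta x0 : R) : 0 < x0 -> x0 <= 1 ->
  RInt (fun s => beta / s) x0 1 = - beta * ln x0.
Proof.
  intros h0 h1.
  assert (H : is_RInt (fun s => beta / s) x0 1 (minus (beta * ln 1) (beta * ln x0))).
  { apply (is_RInt_derive (V := R_CompleteNormedModule) (fun s => beta * ln s)); intros x hx;
      rewrite Rmin_left, Rmax_right in hx by lra.
    - auto_derive; [lra | field; lra].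
    - apply (ex_derive_continuous (K := R_AbsRing) (V := R_NormedModule)).
      auto_derive; lra. }
  apply (is_RInt_unique (V := R_CompleteNormedModule)) in H; rewrite H, ln_1.
  unfold minus, plus, opp; simpl; ring.
Qed.

Lemma RInt_le_log (f : R -> R) (beta x0 : R) : 0 < x0 -> x0 <= 1 ->
  ex_RInt f 0 x0 -> ex_RInt f x0 1 -> RInt f 0 x0 <= 0 ->
  (forall s, x0 < s < 1 -> f s <= - beta / s) ->
  RInt f 0 1 <= beta * ln x0.
Proof.
  intros h0 h1 hi0 hi1 hneg hle.
  rewrite <- (RInt_Chasles (V := R_CompleteNormedModule) f 0 x0 1) by assumption.
  assert (htail : RInt f x0 1 <= RInt (fun s => - beta / s) x0 1).
  { apply RInt_le; [exact h1 | exact hi1 | | exact hle].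
    apply (ex_RInt_continuous (V := R_CompleteNormedModule)); intros s hs.
    rewrite Rmin_left, Rmax_right in hs by lra.
    apply (ex_derive_continuous (K := R_AbsRing) (V := R_NormedModule)).
    auto_derive; lra. }
  rewrite RInt_inv in htail by assumption.
  unfold plus; simpl; lra.
Qed.

Definition Lambda (x y : R) : R :=
  RInt (arg_kernel (cexp (Cmult (RtoC (2 * PI)) (x, y)))) 0 1.

Lemma cexp_2PI (x y : R) : cexp (Cmult (RtoC (2 * PI)) (x, y)) =
  (exp (2 * PI * x) * cos (2 * PI * y), exp (2 * PI * x) * sin (2 * PI * y)).
Proof.
  unfold cexp, Cmult, RtoC, Re, Im; cbn [fst snd].
  f_equal; f_equal; f_equal; ring.
Qed.

Lemma Lambda_nonpos (x y : R) : sin (2 * PI * y) < 0 -> Lambda x y <= 0.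
Proof.
  intro hy; unfold Lambda; rewrite cexp_2PI.
  apply RInt_arg_kernel_nonpos; [| lra | lra].
  unfold Im; cbn; pose proof (exp_pos (2 * PI * x)); nra.
Qed.

Lemma sector_of_large_radius (c s sa r k : R) : 0 < sa -> c <= - sa ->
  -1 <= s -> s < 0 -> 0 <= k -> k <= sa / 2 -> 2 / sa <= r ->
  1 + r * c <= k * (r * s).
Proof.
  intros hsa hc hs1 hs0 hk0 hk1 hr.
  assert (hr2 : 2 <= r * sa).
  { apply Rmult_le_compat_r with (r := sa) in hr; [| lra].
    replace (2 / sa * sa) with 2 in hr by (field; lra); lra. }
  assert (0 <= r * (- sa - c)) by (apply Rmult_le_pos; nra).
  assert (0 <= k * r * (s + 1)) by (apply Rmult_le_pos; [apply Rmult_le_pos |]; nra).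
  assert (0 <= (sa / 2 - k) * r) by (apply Rmult_le_pos; nra).
  nra.
Qed.

(* The slope [T = 1 + sa / 3] is chosen so that the sector of
   [carg_le_sector] (cotangent [(T^2 - 1) / (2 T) <= sa / 2]) contains the
   points [1 + r e^(2 i PI y)] for [r >= 2 / sa]. *)
Lemma Lambda_le_linear (x y sa : R) : 0 < sa ->
  cos (2 * PI * y) <= - sa -> sin (2 * PI * y) < 0 -> ln (2 / sa) <= 2 * PI * x ->
  Lambda x y <= 2 * atan (1 + sa / 3) * (ln (2 / sa) - 2 * PI * x).
Proof.
  intros hsa hc hs hx.
  set (T := 1 + sa / 3); set (E := exp (2 * PI * x)); set (K := 2 / sa).
  assert (hK : 0 < K) by (apply Rdiv_lt_0_compat; lra).
  assert (hE : 0 < E) by apply exp_pos.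
  assert (hKE : K <= E) by (rewrite <- (exp_ln K) by exact hK; apply exp_le_compat, hx).
  assert (hk0 : 0 <= (T ^ 2 - 1) / (2 * T)) by (apply Rdiv_le_0_compat; unfold T; nra).
  assert (hk1 : (T ^ 2 - 1) / (2 * T) <= sa / 2).
  { apply Rmult_le_reg_r with (2 * T); [unfold T; lra |].
    replace ((T ^ 2 - 1) / (2 * T) * (2 * T)) with (T ^ 2 - 1) by (field; unfold T; lra).
    unfold T; nra. }
  pose proof (SIN_bound (2 * PI * y)) as [hs1 _].
  set (u := (E * cos (2 * PI * y), E * sin (2 * PI * y))).
  assert (hu : Im u < 0) by (unfold u, Im; cbn; nra).
  replace (ln K - 2 * PI * x) with (ln (K / E))
    by (unfold Rdiv, E; rewrite ln_mult, ln_Rinv, ln_exp;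
        [ring | ..]; try apply Rinv_0_lt_compat; try apply exp_pos; lra).
  assert (hx0 : 0 < K / E) by (apply Rdiv_lt_0_compat; lra).
  assert (hx1 : K / E <= 1)
    by (apply Rmult_le_reg_r with E; [lra |]; unfold Rdiv;
        rewrite Rmult_assoc, Rinv_l, Rmult_1_l, Rmult_1_r; lra).
  unfold Lambda; rewrite cexp_2PI; fold E u.
  apply RInt_le_log; [exact hx0 | exact hx1 | apply ex_RInt_arg_kernel; lra
    | apply ex_RInt_arg_kernel; lra | apply RInt_arg_kernel_nonpos; lra |].
  intros s [hs0 hs1']; unfold arg_kernel; unfold Rdiv at 1.
  replace (- (2 * atan T) / s) with ((- 2 * atan T) * / s) by (field; lra).
  apply Rmult_le_compat_r; [left; apply Rinv_0_lt_compat; lra |].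
  assert (hr : K <= s * E).
  { replace K with (K / E * E) at 1 by (field; lra).
    apply Rmult_le_compat_r; lra. }
  apply carg_le_sector; [unfold ray, u, Im; cbn; nra | unfold T; lra |].
  unfold ray, u, Re, Im; cbn [fst snd].
  replace (s * (E * cos (2 * PI * y))) with (s * E * cos (2 * PI * y)) by ring.
  replace (s * (E * sin (2 * PI * y))) with (s * E * sin (2 * PI * y)) by ring.
  apply sector_of_large_radius with sa; assumption.
Qed.

Lemma Re_f_fun (sig mu t1 t2 : R) :
  Re (f_fun sig mu (t1, t2)) =
  (Lambda (t1 - sig) t2 + Lambda (t1 + sig) t2) / (2 * PI)
  - 2 * PI * mu * t2 + PI * (t1 - mu).
Proof.
  assert (h0 : RInt (arg_kernel (cexp (RtoC (2 * PI * mu)))) 0 1 = 0).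
  { unfold cexp, RtoC, Re, Im; cbn [fst snd].
    rewrite sin_0, cos_0, Rmult_0_r, Rmult_1_r.
    apply RInt_arg_kernel_pos_real; left; apply exp_pos. }
  assert (hm : cexp (Cmult (RtoC (2 * PI)) (Cminus (t1, t2) (RtoC sig)))
               = cexp (Cmult (RtoC (2 * PI)) (t1 - sig, t2))).
  { do 2 f_equal; unfold Cminus, Cplus, Copp, RtoC; cbn [fst snd]; f_equal; ring. }
  assert (hp : cexp (Cmult (RtoC (2 * PI)) (Cplus (t1, t2) (RtoC sig)))
               = cexp (Cmult (RtoC (2 * PI)) (t1 + sig, t2))).
  { do 2 f_equal; unfold Cplus, RtoC; cbn [fst snd]; f_equal; ring. }
  unfold f_fun; rewrite hm, hp.
  pose proof (Im_Li2_opp (cexp (RtoC (2 * PI * mu)))) as e0.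
  pose proof (Im_Li2_opp (cexp (Cmult (RtoC (2 * PI)) (t1 - sig, t2)))) as em.
  pose proof (Im_Li2_opp (cexp (Cmult (RtoC (2 * PI)) (t1 + sig, t2)))) as ep.
  rewrite h0 in e0; fold (Lambda (t1 - sig) t2) in em; fold (Lambda (t1 + sig) t2) in ep.
  revert e0 em ep.
  generalize (Li2 (Copp (cexp (RtoC (2 * PI * mu))))) as L0,
    (Li2 (Copp (cexp (Cmult (RtoC (2 * PI)) (t1 - sig, t2))))) as Lm,
    (Li2 (Copp (cexp (Cmult (RtoC (2 * PI)) (t1 + sig, t2))))) as Lp.
  intros [a0 b0] [am bm] [ap bp]; unfold Im; cbn [snd]; intros -> -> ->.
  unfold Cminus, Cdiv, Cplus, Cmult, Copp, Cinv, RtoC, Ci, Re; cbn [fst snd].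
  pose proof PI_RGT_0; field; lra.
Qed.

Lemma sin_cos_2PI_bounds (delta t : R) : 0 < delta -> delta < 1 / 8 ->
  -1 / 2 < t -> t < -1 / 4 - delta ->
  sin (2 * PI * t) < 0 /\ cos (2 * PI * t) <= - sin (2 * PI * delta) /\
  0 < sin (2 * PI * delta).
Proof.
  intros h0 h1 h2 h3; pose proof PI_RGT_0.
  split; [| split].
  - replace (2 * PI * t) with (- (2 * PI * - t)) by ring; rewrite sin_neg.
    assert (0 < sin (2 * PI * - t)) by (apply sin_gt_0; nra); lra.
  - rewrite <- cos_neg, (sin_cos (2 * PI * delta)), Ropp_involutive.
    left; apply cos_decreasing_1; nra.
  - apply sin_gt_0; nra.
Qed.

Lemma Re_f_fun_le_Lambda (sig mu t1 t2 : R) : -1 / 2 < t2 -> t2 < 0 ->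
  Re (f_fun sig mu (t1, t2)) <=
  (Lambda (t1 - sig) t2 + Lambda (t1 + sig) t2) / (2 * PI) + PI * t1
  + 2 * PI * Rabs mu.
Proof.
  intros h1 h2; rewrite Re_f_fun; pose proof PI_RGT_0.
  destruct (Rle_or_lt 0 mu) as [hmu | hmu].
  - rewrite Rabs_pos_eq by lra.
    assert (0 <= PI * mu * (1 + 2 * t2)) by (apply Rmult_le_pos; nra); nra.
  - rewrite Rabs_left by lra.
    assert (0 <= PI * - mu * - t2) by (apply Rmult_le_pos; nra); nra.
Qed.

Lemma Lambda_sum_le_linear (sig t1 t2 sa : R) : 0 < sa ->
  cos (2 * PI * t2) <= - sa -> sin (2 * PI * t2) < 0 ->
  Rabs (ln (2 / sa)) <= 2 * PI * (t1 - Rabs sig) ->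
  (Lambda (t1 - sig) t2 + Lambda (t1 + sig) t2) / (2 * PI)
  <= 2 * atan (1 + sa / 3) * Rabs (ln (2 / sa)) / PI - 4 * atan (1 + sa / 3) * t1.
Proof.
  intros hsa hc hs hK; pose proof PI_RGT_0.
  pose proof (Rle_abs (ln (2 / sa))); pose proof (Rle_abs sig); pose proof (Rabs_maj2 sig).
  assert (hm := Lambda_le_linear (t1 - sig) t2 sa hsa hc hs ltac:(nra)).
  assert (hp := Lambda_le_linear (t1 + sig) t2 sa hsa hc hs ltac:(nra)).
  assert (hA : 0 < atan (1 + sa / 3))
    by (rewrite <- atan_0; apply atan_increasing; lra).
  set (A := atan (1 + sa / 3)) in *; set (K := 2 / sa) in *.
  apply Rmult_le_reg_r with (2 * PI); [lra |].
  replace ((Lambda (t1 - sig) t2 + Lambda (t1 + sig) t2) / (2 * PI) * (2 * PI))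
    with (Lambda (t1 - sig) t2 + Lambda (t1 + sig) t2) by (field; lra).
  replace ((2 * A * Rabs (ln K) / PI - 4 * A * t1) * (2 * PI))
    with (4 * A * Rabs (ln K) - 8 * PI * A * t1) by (field; lra).
  nra.
Qed.

Lemma Re_f_fun_linear_decay (sig mu delta : R) : 0 < delta -> delta < 1 / 8 ->
  exists g M T : R, 0 < g /\
  forall t1 t2 : R, T <= Rabs t1 -> -1 / 2 < t2 -> t2 < -1 / 4 - delta ->
    Re (f_fun sig mu (t1, t2)) <= M - g * Rabs t1.
Proof.
  intros hd0 hd1; pose proof PI_RGT_0.
  set (sa := sin (2 * PI * delta)); set (A := atan (1 + sa / 3)).
  set (K := 2 / sa).
  assert (hsa : 0 < sa) by (apply (sin_cos_2PI_bounds delta (-3/8 - delta/2)); lra).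
  assert (hA : PI / 4 < A) by (rewrite <- atan_1; apply atan_increasing; lra).
  pose proof (atan_bound (1 + sa / 3)) as [_ hA2]; fold A in hA2.
  exists (4 * A - PI), (2 * A * Rabs (ln K) / PI + 2 * PI * Rabs mu),
    (Rabs sig + Rabs (ln K) / (2 * PI)).
  split; [lra |]; intros t1 t2 hT h1 h2.
  destruct (sin_cos_2PI_bounds delta t2 hd0 hd1 h1 h2) as [hs [hc _]]; fold sa in hc.
  pose proof (Re_f_fun_le_Lambda sig mu t1 t2 h1 ltac:(lra)).
  assert (hM : 0 <= 2 * A * Rabs (ln K) / PI)
    by (apply Rdiv_le_0_compat; [apply Rmult_le_pos; [lra | apply Rabs_pos] | lra]).
  pose proof (Rabs_pos mu); pose proof (Rabs_pos sig).
  destruct (Rle_or_lt 0 t1) as [ht | ht].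
  - rewrite (Rabs_pos_eq t1) in hT |- * by exact ht.
    assert (hK : Rabs (ln K) <= 2 * PI * (t1 - Rabs sig)).
    { apply Rmult_le_compat_r with (r := 2 * PI) in hT; [| lra].
      replace ((Rabs sig + Rabs (ln K) / (2 * PI)) * (2 * PI))
        with (2 * PI * Rabs sig + Rabs (ln K)) in hT by (field; lra).
      lra. }
    pose proof (Lambda_sum_le_linear sig t1 t2 sa hsa hc hs hK) as hL.
    fold A K in hL; lra.
  - rewrite (Rabs_left t1) in hT |- * by exact ht.
    pose proof (Lambda_nonpos (t1 - sig) t2 hs); pose proof (Lambda_nonpos (t1 + sig) t2 hs).
    assert ((Lambda (t1 - sig) t2 + Lambda (t1 + sig) t2) / (2 * PI) <= 0)
      by (unfold Rdiv; assert (0 < / (2 * PI)) by (apply Rinv_0_lt_compat; lra); nra).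
    nra.
Qed.

Lemma Cmod_cexp_f_fun_g_fun (sig mu t1 t2 b : R) : b <> 0 ->
  Cmod (Cmult (cexp (Cdiv (f_fun sig mu (t1, t2)) (RtoC (b ^ 2))))
              (g_fun mu (t1, t2)))
  = exp (Re (f_fun sig mu (t1, t2)) / b ^ 2 + PI * (t1 - mu)).
Proof.
  intro hb; unfold g_fun; rewrite Cmod_mult, !Cmod_cexp, exp_plus.
  rewrite Re_Cdiv_RtoC by (apply pow_nonzero; exact hb).
  do 2 f_equal; unfold Cmult, Cminus, Cplus, Copp, RtoC, Re; cbn [fst snd]; ring.
Qed.

Lemma exponent_decay (g M X t1 mu b : R) : 0 < g -> 0 < b -> b < 1 ->
  b < g / (4 * PI) -> 4 * Rabs M / g <= Rabs t1 -> X <= M - g * Rabs t1 ->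
  X / b ^ 2 + PI * (t1 - mu) <= PI * Rabs mu + - (g / 2 / b ^ 2) * Rabs t1.
Proof.
  intros hg hb hb1 hbg hT hX; pose proof PI_RGT_0.
  assert (hb2 : 0 < b ^ 2) by nra.
  assert (hbP : b ^ 2 * PI <= g / 4).
  { apply Rmult_lt_compat_r with (r := PI) in hbg; [| lra].
    replace (g / (4 * PI) * PI) with (g / 4) in hbg by (field; lra); nra. }
  assert (hM : M <= g / 4 * Rabs t1).
  { apply Rmult_le_compat_r with (r := g / 4) in hT; [| lra].
    replace (4 * Rabs M / g * (g / 4)) with (Rabs M) in hT by (field; lra).
    pose proof (Rle_abs M); lra. }
  apply Rmult_le_reg_r with (b ^ 2); [exact hb2 |].
  replace ((X / b ^ 2 + PI * (t1 - mu)) * b ^ 2) with (X + b ^ 2 * PI * (t1 - mu))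
    by (field; lra).
  replace ((PI * Rabs mu + - (g / 2 / b ^ 2) * Rabs t1) * b ^ 2)
    with (b ^ 2 * PI * Rabs mu - g / 2 * Rabs t1) by (field; lra).
  assert (b ^ 2 * PI * t1 <= g / 4 * Rabs t1).
  { apply Rle_trans with (b ^ 2 * PI * Rabs t1);
      [apply Rmult_le_compat_l; [nra | apply Rle_abs] |
       apply Rmult_le_compat_r; [apply Rabs_pos | exact hbP]]. }
  assert (b ^ 2 * PI * - mu <= b ^ 2 * PI * Rabs mu)
    by (apply Rmult_le_compat_l; [nra | apply Rabs_maj2]).
  lra.
Qed.

Theorem lemma5p1 (sig mu delta : R) (hd0 : 0 < delta) (hd1 : delta < 1 / 8) :
  exists C0 c : R, 0 < C0 /\ 0 < c /\
  exists T b0 : R, 0 < b0 /\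
  forall t1 t2 b : R,
    T < Rabs t1 ->
    -1/2 < t2 -> t2 < -1/4 - delta ->
    0 < b -> b < b0 ->
    Cmod (Cmult (cexp (Cdiv (f_fun sig mu (t1, t2)) (RtoC (b ^ 2))))
                (g_fun mu (t1, t2)))
      <= C0 * exp (- (c / b ^ 2) * Rabs t1).
Proof.
  destruct (Re_f_fun_linear_decay sig mu delta hd0 hd1) as (g & M & T & hg & hdecay).
  pose proof PI_RGT_0.
  exists (exp (PI * Rabs mu)), (g / 2); split; [apply exp_pos |]; split; [lra |].
  exists (Rmax T (4 * Rabs M / g)), (Rmin 1 (g / (4 * PI))); split.
  { apply Rmin_glb_lt; [lra | apply Rdiv_lt_0_compat; lra]. }
  intros t1 t2 b hT h1 h2 hb hb0.
  pose proof (Rmax_l T (4 * Rabs M / g)); pose proof (Rmax_r T (4 * Rabs M / g)).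
  pose proof (Rmin_l 1 (g / (4 * PI))); pose proof (Rmin_r 1 (g / (4 * PI))).
  rewrite Cmod_cexp_f_fun_g_fun by lra; rewrite <- exp_plus.
  apply exp_le_compat, exponent_decay with M; try lra.
  apply hdecay; lra.
Qed.
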